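(* Let $G$ be a torsion-free abelian group, let $\mathfrak{F}$ be a set freely generating a free group $\langle\mathfrak{F}\rangle$, and let $\pi:\mathfrak{F}\to\mathrm{pAut}\,G$ be a map, extended to reduced words as follows: for a reduced word $\varphi=\varphi_1\cdots\varphi_n$ with $\varphi_i\in\mathfrak{F}\cup\mathfrak{F}^{-1}$ put $\pi(\varphi)=\pi(\varphi_1)\cdots\pi(\varphi_n)$ (composition of partial automorphisms, with $\pi(\psi^{-1})=\pi(\psi)^{-1}$ the weak inverse, and $\pi(1)=\mathrm{id}_G$ for the empty word). Then $\pi$ has the U-property if and only if every reduced $\varphi\in\langle\mathfrak{F}\rangle$ such that $x\pi(\varphi)=x$ for some $x\in\mathrm{Dom}\,\pi(\varphi)\cap{\mathfrak p}G$ satisfies $\varphi=1$.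
   Context: A partial automorphism of $G$ is an isomorphism $\varphi:\mathrm{Dom}\,\varphi\to\mathrm{Im}\,\varphi$ between subgroups of $G$, acting on the right; $\mathrm{pAut}\,G$ is the set of partial automorphisms with $G/\mathrm{Dom}\,\varphi$ and $G/\mathrm{Im}\,\varphi$ both $\aleph_1$-free (every countable subgroup free). Composition: $\mathrm{Dom}(\varphi\psi)=(\mathrm{Im}\,\varphi\cap\mathrm{Dom}\,\psi)\varphi^{-1}$, $x(\varphi\psi)=(x\varphi)\psi$; the weak inverse $\varphi^{-1}$ is the inverse isomorphism $\mathrm{Im}\,\varphi\to\mathrm{Dom}\,\varphi$. ${\mathfrak p}G$ is the set of nonzero $g\in G$ such that $nx=g$ has no solution $x\in G$ for any integer $n\ge2$. $\pi$ has the U-property if for all reduced $\varphi,\varphi'\in\langle\mathfrak{F}\rangle$ with $x\pi(\varphi)=x\pi(\varphi')$ for some $x\in\mathrm{Dom}\,\pi(\varphi)\cap\mathrm{Dom}\,\pi(\varphi')\cap{\mathfrak p}G$ we have $\varphi=\varphi'$. *)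

From mathcomp Require Import all_boot all_order all_algebra.
Set Implicit Arguments. Unset Strict Implicit. Unset Printing Implicit Defensive.
Import GRing.Theory.
Local Open Scope ring_scope.

Definition torsion_free (G : zmodType) : Prop :=
  forall (x : G) (n : nat), (0 < n)%N -> x *+ n = 0 -> x = 0.

Definition is_subgroup (G : zmodType) (K : G -> Prop) : Prop :=
  K 0 /\ forall x y, K x -> K y -> K (x - y).

(* The quotient K/H (H <= K) is countable. *)
Definition countable_mod (G : zmodType) (K H : G -> Prop) : Prop :=
  exists s : nat -> G, forall k, K k -> exists n, H (k - s n).

(* The quotient K/H (H <= K) is a free abelian group: there is a set B of
   elements of K whose cosets form a Z-basis of K/H. *)
Definition free_mod (G : zmodType) (K H : G -> Prop) : Prop :=
  exists B : G -> Prop,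
    (forall b, B b -> K b) /\
    (forall (l : seq G) (c : G -> int),
        uniq l -> (forall b, b \in l -> B b) ->
        H (\sum_(b <- l) b *~ c b) -> forall b, b \in l -> c b = 0) /\
    (forall k, K k -> exists (l : seq G) (c : G -> int),
        (forall b, b \in l -> B b) /\ H (k - \sum_(b <- l) b *~ c b)).

(* G/H is aleph_1-free: every countable subgroup of G/H (i.e. K/H with
   H <= K <= G, K/H countable) is free. *)
Definition aleph1_free_quot (G : zmodType) (H : G -> Prop) : Prop :=
  forall K : G -> Prop, is_subgroup K -> (forall h, H h -> K h) ->
    countable_mod K H -> free_mod K H.

(* Partial maps G -> G represented by their graphs (acting on the right). *)
Definition prel (G : zmodType) := G -> G -> Prop.

Definition Dom (G : zmodType) (R : prel G) : G -> Prop := fun x => exists y, R x y.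
Definition Im (G : zmodType) (R : prel G) : G -> Prop := fun y => exists x, R x y.

Definition is_partial_iso (G : zmodType) (R : prel G) : Prop :=
  [/\ forall x y y', R x y -> R x y' -> y = y',
      forall x x' y, R x y -> R x' y -> x = x',
      R 0 0 &
      forall x y x' y', R x y -> R x' y' -> R (x - x') (y - y')].

Definition is_pAut (G : zmodType) (R : prel G) : Prop :=
  [/\ is_partial_iso R, aleph1_free_quot (Dom R) & aleph1_free_quot (Im R)].

Definition pcomp (G : zmodType) (R S : prel G) : prel G :=
  fun x z => exists y, R x y /\ S y z.
Definition pinv (G : zmodType) (R : prel G) : prel G := fun y x => R x y.
Definition pid (G : zmodType) : prel G := fun x y => x = y.

Definition pG (G : zmodType) (g : G) : Prop :=
  g <> 0 /\ forall (n : nat) (x : G), (2 <= n)%N -> x *+ n <> g.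

(* Words over F ∪ F^{-1}: (f, false) is f, (f, true) is f^{-1}. *)
Fixpoint reduced (F : Type) (w : seq (F * bool)) : Prop :=
  match w with
  | [::] => True
  | a :: w' =>
      match w' with
      | [::] => True
      | b :: _ => ~ (a.1 = b.1 /\ a.2 <> b.2) /\ reduced w'
      end
  end.

Definition letter (F : Type) (G : zmodType) (pi : F -> prel G) (a : F * bool)
  : prel G := if a.2 then pinv (pi a.1) else pi a.1.

Fixpoint pi_word (F : Type) (G : zmodType) (pi : F -> prel G)
  (w : seq (F * bool)) : prel G :=
  match w with
  | [::] => @pid G
  | a :: w' => pcomp (letter pi a) (pi_word pi w')
  end.

Definition U_property (F : Type) (G : zmodType) (pi : F -> prel G) : Prop :=
  forall phi phi' : seq (F * bool), reduced phi -> reduced phi' ->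
    (exists x y, pG x /\ pi_word pi phi x y /\ pi_word pi phi' x y) ->
    phi = phi'.

From mathcomp Require Import all_boot all_order all_algebra.
From Stdlib Require Import Classical.

Set Implicit Arguments.
Unset Strict Implicit.
Unset Printing Implicit Defensive.

(* If reduced words phi and phi' both send x to y, strip their common suffix:
   the letters act injectively, so the shortened words still send x to a common
   point.  If something remains, the last letters differ, and then
   phi (phi')^-1 is a nonempty reduced word fixing x. *)

Section ReducedWords.
Variable F : Type.
Implicit Types (a b c : F * bool) (u v w : seq (F * bool)).

Definition inv_letter a : F * bool := (a.1, ~~ a.2).

Definition winv w := rev (map inv_letter w).

Definition cancels a b : Prop := a.1 = b.1 /\ a.2 <> b.2.

Lemma winv_cons a w : winv (a :: w) = rcons (winv w) (inv_letter a).
Proof. by rewrite /winv /= rev_cons. Qed.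

Lemma winv_rcons w a : winv (rcons w a) = inv_letter a :: winv w.
Proof. by rewrite /winv map_rcons rev_rcons. Qed.

Lemma cancels_inv_letter a b : cancels a (inv_letter b) <-> a = b.
Proof.
case: a b => [f s] [g t]; rewrite /cancels /=; split => [[-> st] | [-> ->]].
  by case: s t st => [] [].
by case: t.
Qed.

Lemma cancels_inv_letters a b :
  cancels (inv_letter b) (inv_letter a) -> cancels a b.
Proof. by case: a b => [f s] [g t] [/= -> st]; split => //; case: s t st => [] []. Qed.

Lemma reduced_rcons_cat u a b v : reduced (rcons u a) -> reduced (b :: v) ->
  ~ cancels a b -> reduced (rcons u a ++ b :: v).
Proof.
elim: u => [|c u IH] //=.
by case: u IH => [|d u] IH /= [hcd hu] hv hab; split => //; exact: IH.
Qed.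

Lemma reduced_catl u v : reduced (u ++ v) -> reduced u.
Proof.
elim: u => [|c u IH] //=.
by case: u IH => [|d u] IH //= [hcd /IH].
Qed.

Lemma reduced_winv w : reduced w -> reduced (winv w).
Proof.
elim: w => [|a [|b w] IH] //= [hab hw].
rewrite !winv_cons -cats1; apply: reduced_rcons_cat => //.
  by rewrite -winv_cons; exact: IH.
by move/cancels_inv_letters.
Qed.

End ReducedWords.

Section WordAction.
Variables (G : zmodType) (F : Type) (pi : F -> prel G).
Implicit Types (a : F * bool) (u v w : seq (F * bool)).

Lemma pi_word_cat u v x z : pi_word pi (u ++ v) x z <->
  exists y, pi_word pi u x y /\ pi_word pi v y z.
Proof.
elim: u x => [|a u IH] x /=.
  by split => [h | [y [-> h]]]; first exists x.
split => [[t [ha /IH [y [hu hv]]]] | [y [[t [ha hu]] hv]]].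
  by exists y; split => //; exists t.
by exists t; split => //; apply/IH; exists y.
Qed.

Lemma pi_word_rcons u a x z : pi_word pi (rcons u a) x z <->
  exists y, pi_word pi u x y /\ letter pi a y z.
Proof.
rewrite -cats1 pi_word_cat; split => [[y [hu [t [ha <-]]]] | [y [hu ha]]].
  by exists y.
by exists y; split => //; exists z.
Qed.

Lemma letter_inv_letter a x y : letter pi a x y -> letter pi (inv_letter a) y x.
Proof. by case: a => f []. Qed.

Lemma pi_word_winv w x y : pi_word pi w x y -> pi_word pi (winv w) y x.
Proof.
elim: w x => [|a w IH] x /=; first by move->.
move=> [t [ha hw]]; rewrite winv_cons; apply/pi_word_rcons.
by exists t; split; [exact: IH | exact: letter_inv_letter].
Qed.

Hypothesis pi_iso : forall f, is_partial_iso (pi f).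

Lemma letter_inj a y y' z : letter pi a y z -> letter pi a y' z -> y = y'.
Proof.
case: a => f s; have [functional injective _ _] := pi_iso f.
by case: s; [exact: functional | exact: injective].
Qed.

Section LoopFree.
Variable x : G.
Hypothesis loop_free : forall w, reduced w -> pi_word pi w x x -> w = [::].

Lemma reduced_words_eq_of_pi_word u v y : reduced u -> reduced v ->
  pi_word pi u x y -> pi_word pi v x y -> u = v.
Proof.
elim/last_ind: u v y => [|p a IH] v y hu hv.
  by rewrite /= /pid => eq_xy; subst y => hvx; rewrite (loop_free hv hvx).
case/lastP: v hv => [|q b] hv.
  by move=> hpa; rewrite /= /pid => eq_xy; subst y; exact: loop_free.
move=> hpa hqb; have [eq_ab | neq_ab] := classic (a = b).
  subst b; move: hpa hqb => /pi_word_rcons [z [hpz hz]] /pi_word_rcons [z' [hqz' hz']].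
  have eq_z : z = z' by exact: letter_inj hz hz'.
  have hp : reduced p by move: hu; rewrite -cats1; exact: reduced_catl.
  have hq : reduced q by move: hv; rewrite -cats1; exact: reduced_catl.
  rewrite eq_z in hpz; congr rcons; exact: IH hp hq hpz hqz'.
have hw : reduced (rcons p a ++ winv (rcons q b)).
  rewrite winv_rcons; apply: reduced_rcons_cat => //.
    by rewrite -winv_rcons; exact: reduced_winv.
  by move/cancels_inv_letter.
have hwx : pi_word pi (rcons p a ++ winv (rcons q b)) x x.
  apply/pi_word_cat; exists y; split; [exact: hpa | exact: pi_word_winv].
by move/(congr1 size): (loop_free hw hwx); rewrite size_cat size_rcons.
Qed.

End LoopFree.
End WordAction.

Theorem proposition3p10 (G : zmodType) (F : Type) (pi : F -> prel G)
  (hG : torsion_free G) (hpi : forall f, is_pAut (pi f)) :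
  U_property pi <->
  (forall phi : seq (F * bool), reduced phi ->
     (exists x, pG x /\ pi_word pi phi x x) -> phi = [::]).
Proof.
have pi_iso f : is_partial_iso (pi f) by have [] := hpi f.
split=> [hU phi hphi [x [px hx]] | hloop phi phi' hphi hphi' [x [y [px [hx hx']]]]].
  by apply: (hU phi [::]) => //; exists x, x.
apply: (reduced_words_eq_of_pi_word pi_iso _ hphi hphi' hx hx') => w hw hwx.
by apply: hloop hw _; exists x.
Qed.
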